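(* Let $\alpha=\alpha(s)$ be a timelike unit speed curve in $\mathbb{S}_1^3$ with geodesic curvature $\kappa_g>0$ and geodesic torsion $\tau_g\neq0$. Then $\alpha$ is congruent to a timelike rectifying curve if and only if $$\frac{\tau_g}{\kappa_g}(s)=\mu_1\sinh(s+s_0)+\mu_2\cosh(s+s_0)$$ for some constants $\mu_1,\mu_2,s_0$ with $\mu_2^2-\mu_1^2<1$.
   Context: Minkowski 4-space $\mathbb{R}_1^4$ is $\mathbb{R}^4$ with $\langle x,y\rangle=-x_1y_1+x_2y_2+x_3y_3+x_4y_4$, $\|x\|=\sqrt{|\langle x,x\rangle|}$. De Sitter 3-space is $\mathbb{S}_1^3=\{x:\langle x,x\rangle=1\}$ with Levi-Civita connection $\overline\nabla$. For a timelike unit speed curve $\alpha(s)$ in $\mathbb{S}_1^3$ ($\langle\alpha',\alpha'\rangle=-1$): $T_\alpha=\alpha'$, $\kappa_g=\|T_\alpha'-\alpha\|$, $N_\alpha=(T_\alpha'-\alpha)/\kappa_g$ (spacelike), $B_\alpha=\alpha\times T_\alpha\times N_\alpha$ (the formal determinant with first row $(-e_1,e_2,e_3,e_4)$ and rows $\alpha,T_\alpha,N_\alpha$), $\tau_g=\langle\overline\nabla_{T_\alpha}N_\alpha,B_\alpha\rangle=\det(\alpha,\alpha',\alpha'',\alpha''')/\kappa_g^2$; Frenet equations $T_\alpha'=\alpha+\kappa_gN_\alpha$, $N_\alpha'=\kappa_gT_\alpha+\tau_gB_\alpha$, $B_\alpha'=-\tau_gN_\alpha$. A timelike non-geodesic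 curve $\alpha$ is a timelike rectifying curve if there is a fixed point $p\in\mathbb{S}_1^3$ with $\pm p\notin\mathrm{Im}(\alpha)$ such that for every $s$ the tangent vector at $\alpha(s)$ of the geodesic of $\mathbb{S}_1^3$ joining $p$ and $\alpha(s)$ is pseudo-orthogonal to $N_\alpha(s)$ (i.e. this geodesic is pseudo-orthogonal to the principal normal geodesic $\cos(t)\alpha(s)+\sin(t)N_\alpha(s)$ at $\alpha(s)$). Congruence is by isometries of $\mathbb{S}_1^3$. *)

From HB Require Import structures.
From mathcomp Require Import all_boot all_order all_algebra.
From mathcomp Require Import all_classical all_reals all_analysis.
Set Implicit Arguments. Unset Strict Implicit. Unset Printing Implicit Defensive.
Import Order.TTheory GRing.Theory Num.Theory.
Import numFieldNormedType.Exports.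
Local Open Scope classical_set_scope.
Local Open Scope ring_scope.

Section Minkowski.
Variable R : realType.
Notation V := 'rV[R]_4.

Definition mink (x y : V) : R :=
  - (x ord0 ord0 * y ord0 ord0) + \sum_(i < 4 | i != ord0) x ord0 i * y ord0 i.

Definition mnorm (x : V) : R := Num.sqrt `| mink x x |.

Definition sinh (x : R) : R := (expR x - expR (- x)) / 2.
Definition cosh (x : R) : R := (expR x + expR (- x)) / 2.

Definition smooth_on (I : set R) (a : R -> V) : Prop :=
  forall (n : nat) (s : R), I s -> derivable (iter n (@derive1 R V) a) s 1.

Definition timelike_unit_speed_deSitter (I : set R) (a : R -> V) : Prop :=
  smooth_on I a /\
  (forall s, I s -> mink (a s) (a s) = 1) /\
  (forall s, I s -> mink (derive1 a s) (derive1 a s) = -1).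

Definition Tf (a : R -> V) : R -> V := derive1 a.
Definition kappa_g (a : R -> V) (s : R) : R := mnorm (derive1 (Tf a) s - a s).
Definition Nf (a : R -> V) (s : R) : V := (kappa_g a s)^-1 *: (derive1 (Tf a) s - a s).

Definition det4 (u0 u1 u2 u3 : V) : R :=
  \det (\matrix_(i < 4, j < 4)
          (nth u0 [:: u0; u1; u2; u3] i) ord0 j).

Definition tau_g (a : R -> V) (s : R) : R :=
  det4 (a s) (derive1 a s) (derive1 (derive1 a) s) (derive1 (derive1 (derive1 a)) s) / (kappa_g a s) ^+ 2.

(* tangent direction at x of the geodesic of S^3_1 joining p and x
   (the projection of p onto T_x S^3_1, defined up to a nonzero factor) *)
Definition geod_dir (p x : V) : V := p - mink p x *: x.

Definition timelike_rectifying (I : set R) (b : R -> V) : Prop :=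
  timelike_unit_speed_deSitter I b /\
  (* non-geodesic: the principal normal is defined everywhere *)
  (forall s, I s -> kappa_g b s != 0) /\
  exists p : V, mink p p = 1 /\
    (forall s, I s -> b s <> p /\ b s <> - p) /\
    (forall s, I s -> mink (geod_dir p (b s)) (Nf b s) = 0).

(* isometries of S^3_1: restrictions of linear isometries of R^4_1 *)
Definition lorentz (A : 'M[R]_4) : Prop :=
  forall x y : V, mink (x *m A) (y *m A) = mink x y.

Definition congruent_to_timelike_rectifying (I : set R) (a : R -> V) : Prop :=
  exists A : 'M[R]_4, lorentz A /\ timelike_rectifying I (fun s => a s *m A).

End Minkowski.

(* Write a1, a2, a3 for the derivatives of a, N = (a2 - a) / kappa and B for the binormal,
   so that B' = - tau N.  As <a, a2 - a> = 0, the geodesic from p to a(s) is orthogonal to N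
   exactly when <p, a2 - a> = 0, and a Lorentz isometry transports this condition from the
   congruent curve back to a.
   If <q, a2 - a> = 0 and <q, q> = 1, then f = <q, a> satisfies f'' = f, so f + f' and f - f'
   are multiples of e^s and e^-s; <q, B> is a constant m, nonzero with m^2 = 1 - f^2 + f'^2
   by Parseval's identity in the frame (a, a1, N, B); and differentiating <q, a2> = <q, a>
   once more gives tau / kappa = - f' / m, a combination of sinh and cosh with
   mu2^2 - mu1^2 = 1 - 1 / m^2 < 1.
   Conversely, if tau / kappa = g = mu1 sinh + mu2 cosh, pick F with F'' = F and F' = - c g:
   then F a - F' a1 + c B is constant along the curve, and c = (1 + mu1^2 - mu2^2)^(-1/2)
   makes it a unit vector p with <p, a2 - a> = 0. *)

From HB Require Import structures.
From mathcomp Require Import all_boot all_order all_algebra.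
From mathcomp Require Import all_classical all_reals all_analysis.
From mathcomp Require Import ring lra.
Import Order.TTheory GRing.Theory Num.Theory.
Import numFieldNormedType.Exports.
Local Open Scope classical_set_scope.
Local Open Scope ring_scope.
Set Implicit Arguments. Unset Strict Implicit. Unset Printing Implicit Defensive.

Section Det4.
Variable R : comPzRingType.

Definition det4_expand (F : nat -> nat -> R) : R :=
 F 0%N 0%N * F 1%N 1%N * F 2%N 2%N * F 3%N 3%N - F 0%N 0%N * F 1%N 1%N * F 2%N 3%N * F 3%N 2%N
 - F 0%N 0%N * F 1%N 2%N * F 2%N 1%N * F 3%N 3%N + F 0%N 0%N * F 1%N 2%N * F 2%N 3%N * F 3%N 1%N
 + F 0%N 0%N * F 1%N 3%N * F 2%N 1%N * F 3%N 2%N - F 0%N 0%N * F 1%N 3%N * F 2%N 2%N * F 3%N 1%N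
 - F 0%N 1%N * F 1%N 0%N * F 2%N 2%N * F 3%N 3%N + F 0%N 1%N * F 1%N 0%N * F 2%N 3%N * F 3%N 2%N
 + F 0%N 1%N * F 1%N 2%N * F 2%N 0%N * F 3%N 3%N - F 0%N 1%N * F 1%N 2%N * F 2%N 3%N * F 3%N 0%N
 - F 0%N 1%N * F 1%N 3%N * F 2%N 0%N * F 3%N 2%N + F 0%N 1%N * F 1%N 3%N * F 2%N 2%N * F 3%N 0%N
 + F 0%N 2%N * F 1%N 0%N * F 2%N 1%N * F 3%N 3%N - F 0%N 2%N * F 1%N 0%N * F 2%N 3%N * F 3%N 1%N
 - F 0%N 2%N * F 1%N 1%N * F 2%N 0%N * F 3%N 3%N + F 0%N 2%N * F 1%N 1%N * F 2%N 3%N * F 3%N 0%N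
 + F 0%N 2%N * F 1%N 3%N * F 2%N 0%N * F 3%N 1%N - F 0%N 2%N * F 1%N 3%N * F 2%N 1%N * F 3%N 0%N
 - F 0%N 3%N * F 1%N 0%N * F 2%N 1%N * F 3%N 2%N + F 0%N 3%N * F 1%N 0%N * F 2%N 2%N * F 3%N 1%N
 + F 0%N 3%N * F 1%N 1%N * F 2%N 0%N * F 3%N 2%N - F 0%N 3%N * F 1%N 1%N * F 2%N 2%N * F 3%N 0%N
 - F 0%N 3%N * F 1%N 2%N * F 2%N 0%N * F 3%N 1%N + F 0%N 3%N * F 1%N 2%N * F 2%N 1%N * F 3%N 0%N.

Lemma det_mx4E (F : nat -> nat -> R) :
  \det (\matrix_(i < 4, j < 4) F i j) = det4_expand F.
Proof.
rewrite (expand_det_row _ ord0) !big_ord_recl big_ord0 /cofactor.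
do 2![rewrite !(expand_det_row _ ord0) !big_ord_recl !big_ord0 /cofactor].
by rewrite !det_mx11 !mxE /= /bump /= /det4_expand; ring.
Qed.

End Det4.

Section MinkowskiAlgebra.
Variable R : realType.
Notation V := 'rV[R]_4.

(* Locked, so that [/=] keeps coordinates folded and [ring] treats them as atoms. *)
Definition crd_def (u : V) (n : nat) : R := u ord0 (inord n).
Fact crd_key : unit. Proof. by []. Qed.
Definition crd := locked_with crd_key crd_def.

Lemma crdE (u : V) n : crd u n = u ord0 (inord n).
Proof. by rewrite /crd unlock. Qed.

Lemma mxE_crd (u : V) (k : 'I_4) : u ord0 k = crd u k.
Proof. by rewrite crdE inord_val. Qed.

Lemma crdD (u v : V) n : crd (u + v) n = crd u n + crd v n.
Proof. by rewrite !crdE mxE. Qed.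

Lemma crdN (u : V) n : crd (- u) n = - crd u n.
Proof. by rewrite !crdE mxE. Qed.

Lemma crdB (u v : V) n : crd (u - v) n = crd u n - crd v n.
Proof. by rewrite crdD crdN. Qed.

Lemma crdZ (r : R) (u : V) n : crd (r *: u) n = r * crd u n.
Proof. by rewrite !crdE mxE. Qed.

Lemma minkE (u v : V) : mink u v =
  - (crd u 0 * crd v 0) + crd u 1 * crd v 1 + crd u 2 * crd v 2 + crd u 3 * crd v 3.
Proof.
by rewrite /mink big_mkcond !big_ord_recl big_ord0 /= !mxE_crd /= /bump /=; ring.
Qed.

Lemma det4E u0 u1 u2 u3 :
  det4 u0 u1 u2 u3 = det4_expand (fun i j => crd (nth u0 [:: u0; u1; u2; u3] i) j).
Proof.
by rewrite /det4 -det_mx4E; congr (\det _); apply/matrixP => i j; rewrite !mxE mxE_crd.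
Qed.

Ltac crd_ring := rewrite ?minkE ?det4E /det4_expand /= ?crdD ?crdN ?crdB ?crdZ; ring.

Lemma minkC (u v : V) : mink u v = mink v u.
Proof. by crd_ring. Qed.

Lemma minkDr (u v w : V) : mink u (v + w) = mink u v + mink u w.
Proof. by crd_ring. Qed.

Lemma minkBr (u v w : V) : mink u (v - w) = mink u v - mink u w.
Proof. by crd_ring. Qed.

Lemma minkBl (u v w : V) : mink (v - w) u = mink v u - mink w u.
Proof. by crd_ring. Qed.

Lemma minkZr (u v : V) r : mink u (r *: v) = r * mink u v.
Proof. by crd_ring. Qed.

Lemma minkNl (u v : V) : mink (- v) u = - mink v u.
Proof. by crd_ring. Qed.

Lemma minkZl (u v : V) r : mink (r *: v) u = r * mink v u.
Proof. by crd_ring. Qed.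

Lemma det4_dup01 (u v w : V) : det4 u u v w = 0. Proof. by crd_ring. Qed.
Lemma det4_dup12 (u v w : V) : det4 u v v w = 0. Proof. by crd_ring. Qed.
Lemma det4_dup03 (u v w : V) : det4 u v w u = 0. Proof. by crd_ring. Qed.
Lemma det4_dup13 (u v w : V) : det4 v u w u = 0. Proof. by crd_ring. Qed.
Lemma det4_dup23 (u v w : V) : det4 v w u u = 0. Proof. by crd_ring. Qed.

Lemma det4_mul_gram (u0 u1 u2 u3 v0 v1 v2 v3 : V) :
  det4 u0 u1 u2 u3 * det4 v0 v1 v2 v3 = - det4_expand (fun i j =>
    mink (nth u0 [:: u0; u1; u2; u3] i) (nth v0 [:: v0; v1; v2; v3] j)).
Proof.
pose M := \matrix_(i < 4, j < 4) (nth u0 [:: u0; u1; u2; u3] i) ord0 j.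
(* N is V diag(-1, 1, 1, 1), so that M N^T is the Gram matrix. *)
pose N := \matrix_(i < 4, j < 4)
   ((if j == ord0 then -1 else 1) * (nth v0 [:: v0; v1; v2; v3] i) ord0 j).
have detN : \det N = - det4 v0 v1 v2 v3.
  rewrite (_ : \det N = det4_expand (fun i j => (if j == 0%N then -1 else 1) *
      crd (nth v0 [:: v0; v1; v2; v3] i) j)); first by rewrite det4E /det4_expand /=; ring.
  by rewrite -det_mx4E; congr (\det _); apply/matrixP => i j; rewrite !mxE mxE_crd.
have MNT : M *m N^T = \matrix_(i < 4, j < 4)
    mink (nth u0 [:: u0; u1; u2; u3] i) (nth v0 [:: v0; v1; v2; v3] j).
  apply/matrixP => i j; rewrite !mxE minkE !big_ord_recl big_ord0 !mxE !mxE_crd /= /bump /=.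
  ring.
by rewrite -det_mx4E -MNT det_mulmx det_tr detN mulrN opprK.
Qed.

Lemma mink_ge0_orth_timelike (y t : V) :
  mink y t = 0 -> mink t t = -1 -> 0 <= mink y y.
Proof.
rewrite !minkE; move: (crd y 0) (crd y 1) (crd y 2) (crd y 3)
  (crd t 0) (crd t 1) (crd t 2) (crd t 3) => y0 y1 y2 y3 t0 t1 t2 t3 yt tt.
set S := y1 ^+ 2 + y2 ^+ 2 + y3 ^+ 2; set T := t1 ^+ 2 + t2 ^+ 2 + t3 ^+ 2.
have t0E : t0 ^+ 2 = 1 + T by rewrite /T !expr2; lra.
have y0t0E : y0 * t0 = y1 * t1 + y2 * t2 + y3 * t3 by lra.
have T_ge0 : 0 <= T by rewrite !addr_ge0 ?sqr_ge0.
(* t0^2 (S - y0^2) = S + (S T - <y,t>^2), and Lagrange's identity for the last term. *)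
have scaled : (S - y0 ^+ 2) * t0 ^+ 2 = S + ((y1 * t2 - y2 * t1) ^+ 2
    + (y1 * t3 - y3 * t1) ^+ 2 + (y2 * t3 - y3 * t2) ^+ 2).
  rewrite (_ : (S - y0 ^+ 2) * t0 ^+ 2 = S * t0 ^+ 2 - (y0 * t0) ^+ 2); last by ring.
  by rewrite t0E y0t0E /S /T; ring.
have : 0 <= (S - y0 ^+ 2) * t0 ^+ 2 by rewrite scaled !addr_ge0 ?sqr_ge0.
rewrite pmulr_lge0; last by rewrite t0E; lra.
by rewrite /S !expr2; lra.
Qed.

Definition vec4 (x0 x1 x2 x3 : R) : V := \row_(j < 4) nth 0 [:: x0; x1; x2; x3] j.

Lemma crd_vec4 x0 x1 x2 x3 n :
  (n < 4)%N -> crd (vec4 x0 x1 x2 x3) n = nth 0 [:: x0; x1; x2; x3] n.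
Proof. by move=> n_lt4; rewrite crdE mxE inordK. Qed.

Lemma mink_nondeg (u v : V) : (forall x, mink x u = mink x v) -> u = v.
Proof.
move=> uv; apply/rowP => j; rewrite !mxE_crd.
have := uv (vec4 1 0 0 0); have := uv (vec4 0 1 0 0).
have := uv (vec4 0 0 1 0); have := uv (vec4 0 0 0 1).
rewrite !minkE !crd_vec4 //=.
by case: j => [[|[|[|[|n]]]] j_lt4] //= *; lra.
Qed.

Definition cross3 (u v w : V) : V :=
  vec4 (- det4 u v w (vec4 1 0 0 0)) (det4 u v w (vec4 0 1 0 0))
       (det4 u v w (vec4 0 0 1 0)) (det4 u v w (vec4 0 0 0 1)).

Lemma mink_cross3 (u v w y : V) : mink y (cross3 u v w) = det4 u v w y.
Proof. by rewrite minkE !crd_vec4 // !det4E /det4_expand /= !crd_vec4 //=; ring. Qed.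

End MinkowskiAlgebra.

Section RealDerivatives.
Variable R : realType.
Implicit Types (f g : R -> R) (s a b : R).

Lemma is_derive_congr f s a b : is_derive s 1 f a -> a = b -> is_derive s 1 f b.
Proof. by move=> ? <-. Qed.

Lemma is_derive_const (c : R) s : is_derive s 1 (fun _ => c) 0.
Proof. exact: is_derive_cst. Qed.

Lemma is_derive_add f g s a b : is_derive s 1 f a -> is_derive s 1 g b ->
  is_derive s 1 (fun t => f t + g t) (a + b).
Proof. exact: is_deriveD. Qed.

Lemma is_derive_opp f s a : is_derive s 1 f a -> is_derive s 1 (fun t => - f t) (- a).
Proof. exact: is_deriveN. Qed.

Lemma is_derive_mul f g s a b : is_derive s 1 f a -> is_derive s 1 g b ->
  is_derive s 1 (fun t => f t * g t) (a * g s + f s * b).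
Proof.
by move=> fa gb; apply: (is_derive_congr (is_deriveM fa gb)); rewrite /GRing.scale /=; ring.
Qed.

Lemma is_derive_eq_on_open (I : set R) f g s a b : open I -> I s ->
  {in I, f =1 g} -> is_derive s 1 f a -> is_derive s 1 g b -> a = b.
Proof.
move=> oI Is fg fa gb.
have fg_near : \near s, f s = g s.
  by apply: filterS (open_nbhs_nbhs (conj oI Is)) => t It; apply: fg; rewrite inE.
by case: (near_eq_is_derive fg_near fa) => _ <-; case: gb => _ <-.
Qed.

Lemma is_derive0_cst_on_interval (I : set R) f : is_interval I ->
  (forall t, I t -> is_derive t 1 f 0) -> {in I &, forall x y, f x = f y}.
Proof.
move=> iI f'0.
suff f_lt x y : x < y -> I x -> I y -> f x = f y.
  move=> x y; rewrite !inE => Ix Iy.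
  by case: (ltgtP x y) => [/f_lt->|/f_lt/(_ Iy Ix)->|->].
move=> xy Ix Iy; have I_xy z : x <= z <= y -> I z by exact: iI.
have f'0_in z : z \in `]x, y[ -> is_derive z 1 f 0.
  by rewrite in_itv /= => /andP[xz zy]; apply/f'0/I_xy; rewrite !ltW.
have f_cont : {within `[x, y], continuous f}.
  apply: derivable_within_continuous => z; rewrite in_itv /= => xzy.
  by case: (f'0 z (I_xy z xzy)).
have [c _] := MVT xy f'0_in f_cont.
by rewrite mul0r => /eqP; rewrite subr_eq0 => /eqP.
Qed.

Lemma is_derive_expRN s : is_derive s 1 (fun t => expR (- t)) (- expR (- s)).
Proof.
apply: (is_derive_congr (is_derive1_comp (is_derive_expR (- s)) (is_deriveN _))).
by rewrite mulrN1.
Qed.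

Lemma derive_swap_expR (I : set R) f g : is_interval I -> I !=set0 ->
  (forall t, I t -> is_derive t 1 f (g t)) -> (forall t, I t -> is_derive t 1 g (f t)) ->
  exists c1 c2, forall t, I t ->
    f t + g t = c1 * expR t /\ f t - g t = c2 * expR (- t).
Proof.
move=> iI [s1 Is1] f' g'.
have sum_cst : {in I &, forall x y, (f x + g x) * expR (- x) = (f y + g y) * expR (- y)}.
  apply: is_derive0_cst_on_interval => // t It.
  apply: (is_derive_congr (is_derive_mul (is_derive_add (f' t It) (g' t It))
    (is_derive_expRN t))).
  by ring.
have dif_cst : {in I &, forall x y, (f x - g x) * expR x = (f y - g y) * expR y}.
  apply: is_derive0_cst_on_interval => // t It.
  apply: (is_derive_congr (is_derive_mul (is_derive_add (f' t It) (is_derive_opp (g' t It)))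
    (is_derive_expR t))).
  by ring.
exists ((f s1 + g s1) * expR (- s1)), ((f s1 - g s1) * expR s1) => t It.
rewrite -(sum_cst t s1) ?inE // -(dif_cst t s1) ?inE //.
by rewrite -!mulrA [expR (- t) * _]mulrC !expRxMexpNx_1 !mulr1.
Qed.

Lemma is_derive_shift s0 s : is_derive s 1 (fun t => t + s0) 1.
Proof.
apply: (is_derive_congr (is_derive_add (is_derive_id s 1) (is_derive_const s0 s))).
by rewrite addr0.
Qed.

Lemma is_derive_expR_shift s0 s :
  is_derive s 1 (fun t => expR (t + s0)) (expR (s + s0)).
Proof.
have h := is_derive1_comp (g := fun t => t + s0) (is_derive_expR (s + s0)) (is_derive_shift s0 s).
by rewrite mulr1 in h.
Qed.

Lemma is_derive_expRN_shift s0 s :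
  is_derive s 1 (fun t => expR (- (t + s0))) (- expR (- (s + s0))).
Proof.
have h := is_derive1_comp (g := fun t => t + s0) (is_derive_expRN (s + s0)) (is_derive_shift s0 s).
by rewrite mulr1 in h.
Qed.

Lemma is_derive_sinh_shift s0 s :
  is_derive s 1 (fun t => sinh (t + s0)) (cosh (s + s0)).
Proof.
apply: (is_derive_congr (is_derive_mul (is_derive_add (is_derive_expR_shift s0 s)
  (is_derive_opp (is_derive_expRN_shift s0 s))) (is_derive_const 2^-1 s))).
by rewrite /cosh; ring.
Qed.

Lemma is_derive_cosh_shift s0 s :
  is_derive s 1 (fun t => cosh (t + s0)) (sinh (s + s0)).
Proof.
apply: (is_derive_congr (is_derive_mul (is_derive_add (is_derive_expR_shift s0 s)
  (is_derive_expRN_shift s0 s)) (is_derive_const 2^-1 s))).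
by rewrite /sinh; ring.
Qed.

Lemma is_derive_cosh_sinh_shift (mu1 mu2 s0 s : R) :
  is_derive s 1 (fun t => mu1 * cosh (t + s0) + mu2 * sinh (t + s0))
    (mu1 * sinh (s + s0) + mu2 * cosh (s + s0)).
Proof.
apply: (is_derive_congr (is_derive_add
  (is_derive_mul (is_derive_const mu1 s) (is_derive_cosh_shift s0 s))
  (is_derive_mul (is_derive_const mu2 s) (is_derive_sinh_shift s0 s)))).
by ring.
Qed.

Lemma cosh2_sub_sinh2 (u : R) : cosh u ^+ 2 - sinh u ^+ 2 = 1.
Proof.
rewrite /cosh /sinh -[RHS](expRxMexpNx_1 u).
by move: (expR u) (expR (- u)) => x y; field.
Qed.

End RealDerivatives.

Section VectorDerivatives.
Variable R : realType.
Notation V := 'rV[R]_4.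
Implicit Types (u v w : R -> V) (s : R).

Lemma is_derive_crd u s n : derivable u s 1 ->
  is_derive s 1 (fun t => crd (u t) n) (crd (derive1 u s) n).
Proof.
move=> du; under eq_fun do rewrite crdE.
have du_n : derivable (fun t => u t ord0 (inord n)) s 1 by move/derivable_mxP: du.
by apply: DeriveDef => //; rewrite crdE derive1E derive_mx // mxE.
Qed.

Ltac derive_poly :=
  repeat first [ eapply is_derive_const | eapply is_derive_add | eapply is_derive_mul
               | eapply is_derive_opp
               | match goal with h : forall n : nat, is_derive _ _ _ _ |- _ => eapply h end ].

Lemma is_derive_mink u v s : derivable u s 1 -> derivable v s 1 ->
  is_derive s 1 (fun t => mink (u t) (v t))
    (mink (derive1 u s) (v s) + mink (u s) (derive1 v s)).
Proof.
move=> du dv; have du_n n := is_derive_crd n du; have dv_n n := is_derive_crd n dv.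
under eq_fun do rewrite minkE.
eapply is_derive_congr; first by derive_poly.
by rewrite !minkE /GRing.scale /=; ring.
Qed.

Lemma is_derive_mink_cstl (q : V) u s : derivable u s 1 ->
  is_derive s 1 (fun t => mink q (u t)) (mink q (derive1 u s)).
Proof.
move=> du; apply: (is_derive_congr (is_derive_mink (derivable_cst q s 1) du)).
by rewrite derive1_cst [mink 0 _]minkE !crdE !mxE; ring.
Qed.

Lemma is_derive_det4 u v w (x : V) s :
  derivable u s 1 -> derivable v s 1 -> derivable w s 1 ->
  is_derive s 1 (fun t => det4 (u t) (v t) (w t) x)
    (det4 (derive1 u s) (v s) (w s) x + det4 (u s) (derive1 v s) (w s) x
     + det4 (u s) (v s) (derive1 w s) x).
Proof.
move=> du dv dw; have du_n n := is_derive_crd n du; have dv_n n := is_derive_crd n dv.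
have dw_n n := is_derive_crd n dw; under eq_fun do rewrite det4E /det4_expand /=.
eapply is_derive_congr; first by derive_poly.
rewrite !det4E /det4_expand /= /GRing.scale /=.
move: (derive1 u s) (derive1 v s) (derive1 w s) (u s) (v s) (w s) => u' v' w' u0 v0 w0.
ring.
Qed.

Lemma is_derive_mulmx u (A : 'M[R]_4) s : derivable u s 1 ->
  is_derive s 1 (fun t => u t *m A) (derive1 u s *m A).
Proof.
move=> du; have du_n n := is_derive_crd n du.
have entry j : is_derive s 1 (fun t => (u t *m A) ord0 j) ((derive1 u s *m A) ord0 j).
  have mulmxE (y : V) : (y *m A) ord0 j = \sum_(k < 4) crd y k * A k j.
    by rewrite mxE; apply: eq_bigr => k _; rewrite mxE_crd.
  under eq_fun do rewrite mulmxE !big_ord_recl big_ord0.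
  rewrite mulmxE !big_ord_recl big_ord0.
  eapply is_derive_congr; first by derive_poly.
  by rewrite /=; ring.
have duA : derivable (fun t => u t *m A) s 1.
  by apply/derivable_mxP => i j; rewrite (ord1 i); case: (entry j).
apply: DeriveDef => //; rewrite derive_mx //; apply/matrixP => i j.
by rewrite mxE (ord1 i); case: (entry j).
Qed.

End VectorDerivatives.

Section Frame.
Variable R : realType.
Notation V := 'rV[R]_4.
Variables (I : set R) (a a1 a2 a3 : R -> V).
Hypothesis oI : open I.
Hypotheses (a1E : derive1 a = a1) (a2E : derive1 a1 = a2) (a3E : derive1 a2 = a3).
Hypotheses (da : forall s, I s -> derivable a s 1) (da1 : forall s, I s -> derivable a1 s 1)
  (da2 : forall s, I s -> derivable a2 s 1).
Hypotheses (mink00 : forall s, I s -> mink (a s) (a s) = 1)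
  (mink11 : forall s, I s -> mink (a1 s) (a1 s) = -1).

Lemma is_derive_cst_on (f : R -> R) c s d : I s ->
  (forall t, I t -> f t = c) -> is_derive s 1 f d -> d = 0.
Proof.
move=> Is fc fd; apply: (is_derive_eq_on_open oI Is _ fd (is_derive_const c s)).
by move=> t; rewrite inE => /fc.
Qed.

Lemma mink01 s : I s -> mink (a s) (a1 s) = 0.
Proof.
move=> Is; have := is_derive_cst_on Is mink00 (is_derive_mink (da Is) (da Is)).
by rewrite a1E (minkC (a1 s)); lra.
Qed.

Lemma mink12 s : I s -> mink (a1 s) (a2 s) = 0.
Proof.
move=> Is; have := is_derive_cst_on Is mink11 (is_derive_mink (da1 Is) (da1 Is)).
by rewrite a2E (minkC (a2 s)); lra.
Qed.

Lemma mink02 s : I s -> mink (a s) (a2 s) = 1.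
Proof.
move=> Is; have := is_derive_cst_on Is mink01 (is_derive_mink (da Is) (da1 Is)).
by rewrite a1E a2E mink11 //; lra.
Qed.

Lemma mink13 s : I s -> mink (a1 s) (a3 s) = - mink (a2 s) (a2 s).
Proof.
move=> Is; have := is_derive_cst_on Is mink12 (is_derive_mink (da1 Is) (da2 Is)).
by rewrite a2E a3E; lra.
Qed.

Lemma mink03 s : I s -> mink (a s) (a3 s) = 0.
Proof.
move=> Is; have := is_derive_cst_on Is mink02 (is_derive_mink (da Is) (da2 Is)).
by rewrite a1E a3E mink12 //; lra.
Qed.

Lemma kappa_sqr s : I s -> kappa_g a s ^+ 2 = mink (a2 s) (a2 s) - 1.
Proof.
move=> Is.
have nnE : mink (a2 s - a s) (a2 s - a s) = mink (a2 s) (a2 s) - 1.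
  by rewrite minkBl !minkBr (minkC (a2 s) (a s)) mink02 // mink00 //; ring.
have nn_ge0 : 0 <= mink (a2 s - a s) (a2 s - a s).
  apply: (mink_ge0_orth_timelike _ (mink11 Is)).
  by rewrite minkBl (minkC (a2 s)) mink12 // mink01 // subrr.
by rewrite /kappa_g /mnorm /Tf a1E a2E ger0_norm // sqr_sqrtr // nnE.
Qed.

Hypothesis kappa_gt0 : forall s, I s -> 0 < kappa_g a s.
Hypothesis tau_neq0 : forall s, I s -> tau_g a s != 0.

Lemma kappa_neq0 s : I s -> kappa_g a s != 0.
Proof. by move=> Is; rewrite gt_eqF ?kappa_gt0. Qed.

Lemma mink22_sub1_neq0 s : I s -> mink (a2 s) (a2 s) - 1 != 0.
Proof. by move=> Is; rewrite -kappa_sqr // expf_neq0 ?kappa_neq0. Qed.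

Lemma tau_gE s : tau_g a s = det4 (a s) (a1 s) (a2 s) (a3 s) / kappa_g a s ^+ 2.
Proof. by rewrite /tau_g a1E a2E a3E. Qed.

Lemma det4_frame_neq0 s : I s -> det4 (a s) (a1 s) (a2 s) (a3 s) != 0.
Proof. by move=> Is; apply: contraNneq (tau_neq0 Is); rewrite tau_gE => ->; rewrite mul0r. Qed.

Lemma is_derive_kappa s : I s ->
  is_derive s 1 (kappa_g a) (mink (a2 s) (a3 s) / kappa_g a s).
Proof.
move=> Is; pose h t := mink (a2 t) (a2 t) - 1.
have kappaE t : I t -> kappa_g a t = Num.sqrt (h t).
  by move=> It; rewrite /h -kappa_sqr // sqrtr_sqr ger0_norm // ltW ?kappa_gt0.
have h_gt0 : 0 < h s by rewrite /h -kappa_sqr // exprn_gt0 ?kappa_gt0.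
have dh : is_derive s 1 h (mink (a3 s) (a2 s) + mink (a2 s) (a3 s) - 0).
  apply: is_derive_add (is_derive_opp (is_derive_const _ _)).
  by rewrite -a3E; exact: is_derive_mink (da2 Is) (da2 Is).
have near_kappa : \near s, (Num.sqrt \o h) s = kappa_g a s.
  by apply: filterS (open_nbhs_nbhs (conj oI Is)) => t It /=; rewrite kappaE.
apply: (is_derive_congr (near_eq_is_derive near_kappa
  (is_derive1_comp (is_derive1_sqrt h_gt0) dh))).
have sqrt_neq0 : Num.sqrt (h s) != 0 by rewrite sqrtr_eq0 -ltNge.
by rewrite kappaE // (minkC (a3 s)); field.
Qed.

Definition binormal s := (kappa_g a s)^-1 *: cross3 (a s) (a1 s) (a2 s).

Lemma mink_binormal x s :
  mink x (binormal s) = det4 (a s) (a1 s) (a2 s) x / kappa_g a s.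
Proof. by rewrite minkZr mink_cross3 mulrC. Qed.

Lemma mink_a_binormal s : mink (a s) (binormal s) = 0.
Proof. by rewrite mink_binormal det4_dup03 mul0r. Qed.

Lemma mink_a1_binormal s : mink (a1 s) (binormal s) = 0.
Proof. by rewrite mink_binormal det4_dup13 mul0r. Qed.

Lemma mink_a2_binormal s : mink (a2 s) (binormal s) = 0.
Proof. by rewrite mink_binormal det4_dup23 mul0r. Qed.

Ltac frame_mink Is :=
  rewrite ?(minkC (a1 _) (a _)) ?(minkC (a2 _) (a _)) ?(minkC (a3 _) (a _))
          ?(minkC (a2 _) (a1 _)) ?(minkC (a3 _) (a1 _)) ?(minkC (a3 _) (a2 _));
  rewrite ?(mink00 Is) ?(mink01 Is) ?(mink02 Is) ?(mink03 Is) ?(mink11 Is)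
          ?(mink12 Is) ?(mink13 Is).

Lemma det4_frame_a3 x s : I s ->
  det4 (a s) (a1 s) (a3 s) x = (mink (a2 s) (a3 s) * det4 (a s) (a1 s) (a2 s) x
    - det4 (a s) (a1 s) (a2 s) (a3 s) * mink x (a2 s - a s)) / kappa_g a s ^+ 2.
Proof.
move=> Is; have D3_neq0 := det4_frame_neq0 Is.
have k2_neq0 := mink22_sub1_neq0 Is.
have g1 := det4_mul_gram (a s) (a1 s) (a2 s) (a3 s) (a s) (a1 s) (a3 s) x.
have g2 := det4_mul_gram (a s) (a1 s) (a2 s) (a3 s) (a s) (a1 s) (a2 s) x.
have g3 := det4_mul_gram (a s) (a1 s) (a2 s) (a3 s) (a s) (a1 s) (a2 s) (a3 s).
(* Multiplied by det4 (a s) (a1 s) (a2 s) (a3 s), each det4 becomes a Gram determinant. *)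
rewrite /det4_expand /= in g1 g2 g3; move: g1 g2 g3; frame_mink Is.
rewrite kappa_sqr // minkBr (minkC x (a2 s)) (minkC x (a s)).
move: (det4 (a s) (a1 s) (a2 s) (a3 s)) (det4 (a s) (a1 s) (a3 s) x)
  (det4 (a s) (a1 s) (a2 s) x) D3_neq0 => D3 Y D D3_neq0 g1 g2 g3.
move: (mink (a2 s) (a2 s)) (mink (a2 s) (a3 s)) (mink (a3 s) (a3 s)) (mink (a s) x)
  (mink (a1 s) x) (mink (a2 s) x) (mink (a3 s) x) k2_neq0 g1 g2 g3
  => m22 w m33 X0 X1 X2 X3 k2_neq0 g1 g2 g3.
have : D3 * (Y * (m22 - 1) - (w * D - D3 * (X2 - X0))) = 0.
  transitivity ((m22 - 1) * (D3 * Y) - w * (D3 * D) + (X2 - X0) * (D3 * D3)); first by ring.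
  by rewrite g1 g2 g3; ring.
by move/eqP; rewrite mulf_eq0 (negbTE D3_neq0) /= subr_eq0 => /eqP <-; field.
Qed.

Lemma is_derive_det4_frame x s : I s ->
  is_derive s 1 (fun t => det4 (a t) (a1 t) (a2 t) x) (det4 (a s) (a1 s) (a3 s) x).
Proof.
move=> Is; apply: (is_derive_congr (is_derive_det4 x (da Is) (da1 Is) (da2 Is))).
by rewrite a1E a2E a3E det4_dup01 det4_dup12 !add0r.
Qed.

(* The Frenet equation B' = - tau N, tested against a fixed vector x. *)
Lemma is_derive_mink_binormal x s : I s ->
  is_derive s 1 (fun t => mink x (binormal t))
    (- (tau_g a s / kappa_g a s) * mink x (a2 s - a s)).
Proof.
move=> Is; under eq_fun do rewrite mink_binormal.
apply: (is_derive_congr (is_derive_mul (is_derive_det4_frame x Is)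
  (is_deriveV (kappa_neq0 Is) (is_derive_kappa Is)))).
rewrite det4_frame_a3 // tau_gE /GRing.scale /=.
move: (kappa_g a s) (kappa_neq0 Is) (det4 (a s) (a1 s) (a2 s) x)
  (det4 (a s) (a1 s) (a2 s) (a3 s)) (mink (a2 s) (a3 s)) (mink x (a2 s - a s))
  => k k_neq0 D D3 w X.
by field.
Qed.

Lemma mink_binormal_binormal s : I s -> mink (binormal s) (binormal s) = 1.
Proof.
move=> Is; set W := cross3 (a s) (a1 s) (a2 s).
have g := det4_mul_gram (a s) (a1 s) (a2 s) (a3 s) (a s) (a1 s) (a2 s) W.
rewrite /det4_expand /= !mink_cross3 det4_dup03 det4_dup13 det4_dup23 in g.
move: g; frame_mink Is => g.
have WW : det4 (a s) (a1 s) (a2 s) W = mink (a2 s) (a2 s) - 1.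
  apply: (mulfI (det4_frame_neq0 Is)); rewrite g.
  by move: (det4 (a s) (a1 s) (a2 s) (a3 s)) (mink (a2 s) (a2 s)) => *; ring.
rewrite minkZl minkZr mink_cross3 WW -kappa_sqr //.
by move: (kappa_g a s) (kappa_neq0 Is) => k k_neq0; field.
Qed.

Lemma mink_binormal_a3 x s : I s -> mink x (a s) = mink x (a2 s) ->
  tau_g a s * kappa_g a s * mink x (binormal s)
    = mink x (a3 s) - (kappa_g a s ^+ 2 + 1) * mink x (a1 s).
Proof.
move=> Is xa.
have g := det4_mul_gram (a s) (a1 s) (a2 s) x (a s) (a1 s) (a2 s) (a3 s).
rewrite /det4_expand /= in g; move: g; frame_mink Is; rewrite xa => g.
rewrite tau_gE mink_binormal.
have -> : det4 (a s) (a1 s) (a2 s) (a3 s) / kappa_g a s ^+ 2 * kappa_g a s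
    * (det4 (a s) (a1 s) (a2 s) x / kappa_g a s)
    = det4 (a s) (a1 s) (a2 s) x * det4 (a s) (a1 s) (a2 s) (a3 s) / kappa_g a s ^+ 2.
  by move: (kappa_g a s) (kappa_neq0 Is) => k k_neq0; field.
rewrite g kappa_sqr //.
have k2_neq0 := mink22_sub1_neq0 Is.
move: (mink (a2 s) (a2 s)) (mink (a2 s) (a3 s)) (mink x (a2 s)) (mink x (a1 s))
  (mink x (a3 s)) k2_neq0 => m22 w X2 X1 X3 k2_neq0.
by field.
Qed.

(* Parseval's identity in the frame (a, a1, N, binormal) for x orthogonal to N. *)
Lemma mink_binormal_sqr x s : I s -> mink x x = 1 -> mink x (a s) = mink x (a2 s) ->
  mink x (binormal s) ^+ 2 = 1 - mink x (a s) ^+ 2 + mink x (a1 s) ^+ 2.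
Proof.
move=> Is xx xa.
have g := det4_mul_gram (a s) (a1 s) (a2 s) x (a s) (a1 s) (a2 s) x.
rewrite /det4_expand /= (minkC (a s) x) (minkC (a1 s) x) (minkC (a2 s) x) in g.
move: g; frame_mink Is; rewrite -xa xx -expr2 => g.
have k2_neq0 := mink22_sub1_neq0 Is.
rewrite mink_binormal expr_div_n g kappa_sqr //.
by move: (mink (a2 s) (a2 s)) (mink x (a s)) (mink x (a1 s)) k2_neq0 => m22 X0 X1 k2_neq0; field.
Qed.

Hypotheses (iI : is_interval I) (nI : I !=set0).

Section RectifyingPoint.
Variable q : V.
Hypothesis q_rect : forall s, I s -> mink q (a2 s - a s) = 0.

Lemma rect_mink_a_a2 s : I s -> mink q (a s) = mink q (a2 s).
Proof. by move=> Is; apply/esym/subr0_eq; rewrite -minkBr q_rect. Qed.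

Lemma rect_mink_a3_a1 s : I s -> mink q (a3 s) = mink q (a1 s).
Proof.
move=> Is; apply: (is_derive_eq_on_open (f := fun t => mink q (a2 t))
  (g := fun t => mink q (a t)) oI Is).
- by move=> t; rewrite inE => /rect_mink_a_a2 ->.
- by rewrite -a3E; exact: is_derive_mink_cstl (da2 Is).
- by rewrite -a1E; exact: is_derive_mink_cstl (da Is).
Qed.

Lemma mink_frame_ode :
  exists c1 c2, forall t, I t -> mink q (a t) + mink q (a1 t) = c1 * expR t
                              /\ mink q (a t) - mink q (a1 t) = c2 * expR (- t).
Proof.
apply: derive_swap_expR => // t It; first by rewrite -a1E; exact: is_derive_mink_cstl (da It).
by rewrite rect_mink_a_a2 // -a2E; exact: is_derive_mink_cstl (da1 It).
Qed.

Lemma mink_binormal_cst : {in I &, forall x y, mink q (binormal x) = mink q (binormal y)}.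
Proof.
apply: is_derive0_cst_on_interval => // t It.
by apply: (is_derive_congr (is_derive_mink_binormal q It)); rewrite q_rect // mulr0.
Qed.

Lemma tau_kappa_mink_binormal s : I s ->
  tau_g a s / kappa_g a s * mink q (binormal s) = - mink q (a1 s).
Proof.
move=> Is; have := mink_binormal_a3 Is (rect_mink_a_a2 Is); rewrite rect_mink_a3_a1 //.
move: (kappa_g a s) (kappa_neq0 Is) (tau_g a s) (mink q (binormal s)) (mink q (a1 s))
  => k k_neq0 tau m f1 tauE.
rewrite (_ : tau / k * m = tau * k * m / k ^+ 2); last by field.
by rewrite tauE; field.
Qed.

Hypothesis q_unit : mink q q = 1.

Lemma mink_binormal_neq0 s : I s -> mink q (binormal s) != 0.
Proof.
move=> Is; apply/eqP => m0.
have f1_0 t : I t -> mink q (a1 t) = 0.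
  move=> It; apply/eqP; rewrite -oppr_eq0 -tau_kappa_mink_binormal //.
  by rewrite (mink_binormal_cst (y := s)) ?inE // m0 mulr0.
have f0 : mink q (a s) = 0.
  apply: (is_derive_cst_on Is f1_0); rewrite rect_mink_a_a2 // -a2E.
  exact: is_derive_mink_cstl (da1 Is).
have := mink_binormal_sqr Is q_unit (rect_mink_a_a2 Is).
by rewrite m0 f0 f1_0 // !expr2 !mul0r; lra.
Qed.

Lemma rectifying_tau_over_kappa :
  exists mu1 mu2 s0 : R, mu2 ^+ 2 - mu1 ^+ 2 < 1 /\
    forall s, I s -> tau_g a s / kappa_g a s = mu1 * sinh (s + s0) + mu2 * cosh (s + s0).
Proof.
have [c1 [c2 cE]] := mink_frame_ode.
have [s1 Is1] := nI; set m := mink q (binormal s1).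
have m_neq0 : m != 0 := mink_binormal_neq0 Is1.
have m2 : m ^+ 2 = 1 - c1 * c2.
  have := mink_binormal_sqr Is1 q_unit (rect_mink_a_a2 Is1); rewrite -/m => ->.
  have [e1 e2] := cE s1 Is1.
  transitivity (1 - (mink q (a s1) + mink q (a1 s1)) * (mink q (a s1) - mink q (a1 s1)));
    first by ring.
  by rewrite e1 e2 -[c1 * c2]mulr1 -(expRxMexpNx_1 s1); ring.
exists (- (c1 + c2) / (2 * m)), (- (c1 - c2) / (2 * m)), 0; split.
  have m2_gt0 : 0 < m ^+ 2 by rewrite exprn_even_gt0.
  rewrite (_ : (- (c1 - c2) / (2 * m)) ^+ 2 - (- (c1 + c2) / (2 * m)) ^+ 2
    = - (c1 * c2) / m ^+ 2); last by field.
  by rewrite ltr_pdivrMr // mul1r; lra.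
move=> t It; have := tau_kappa_mink_binormal It.
rewrite (mink_binormal_cst (y := s1)) ?inE // -/m => tkE.
apply: (mulIf m_neq0); rewrite tkE addr0 /sinh /cosh.
have [e1 e2] := cE t It.
have -> : mink q (a1 t) = (c1 * expR t - c2 * expR (- t)) / 2 by rewrite -e1 -e2; field.
by field.
Qed.

End RectifyingPoint.

Definition frame_comb (f f1 c s : R) : V := f *: a s - f1 *: a1 s + c *: binormal s.

Lemma mink_frame_comb (f f1 c s : R) : I s ->
  [/\ mink (frame_comb f f1 c s) (a s) = f, mink (frame_comb f f1 c s) (a1 s) = f1,
      mink (frame_comb f f1 c s) (a2 s) = f & mink (frame_comb f f1 c s) (binormal s) = c].
Proof.
move=> Is; rewrite /frame_comb; split; rewrite minkC minkDr minkBr 3!minkZr; frame_mink Is.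
- by rewrite mink_a_binormal; ring.
- by rewrite mink_a1_binormal; ring.
- by rewrite mink_a2_binormal; ring.
- rewrite (minkC _ (a s)) (minkC _ (a1 s)) mink_a_binormal mink_a1_binormal.
  by rewrite mink_binormal_binormal //; ring.
Qed.

Lemma frame_comb_cst (F F1 : R -> R) c :
  (forall t, I t -> is_derive t 1 F (F1 t)) -> (forall t, I t -> is_derive t 1 F1 (F t)) ->
  (forall t, I t -> c * (tau_g a t / kappa_g a t) = - F1 t) ->
  {in I &, forall x y, frame_comb (F x) (F1 x) c x = frame_comb (F y) (F1 y) c y}.
Proof.
move=> dF dF1 cF1 x y Ix Iy; apply: mink_nondeg => z.
pose f t := mink z (frame_comb (F t) (F1 t) c t).
apply: (is_derive0_cst_on_interval (f := f) iI _ Ix Iy) => t It.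
rewrite /f /frame_comb; under eq_fun do rewrite minkDr minkBr 3!minkZr.
apply: (is_derive_congr (is_derive_add (is_derive_add
  (is_derive_mul (dF t It) (is_derive_mink_cstl z (da It)))
  (is_derive_opp (is_derive_mul (dF1 t It) (is_derive_mink_cstl z (da1 It)))))
  (is_derive_mul (is_derive_const c t) (is_derive_mink_binormal z It)))).
rewrite a1E a2E minkBr [c * (_ * _)]mulrA [c * - _]mulrN cF1 // opprK.
by ring.
Qed.

Lemma tau_over_kappa_rectifying (mu1 mu2 s0 : R) : mu2 ^+ 2 - mu1 ^+ 2 < 1 ->
  (forall s, I s -> tau_g a s / kappa_g a s = mu1 * sinh (s + s0) + mu2 * cosh (s + s0)) ->
  exists p, mink p p = 1 /\ (forall s, I s -> a s <> p /\ a s <> - p) /\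
    (forall s, I s -> mink p (a2 s - a s) = 0).
Proof.
move=> mu_lt1 tkE; have [s1 Is1] := nI.
pose r := 1 + mu1 ^+ 2 - mu2 ^+ 2; have r_gt0 : 0 < r by rewrite /r; lra.
pose c : R := (Num.sqrt r)^-1.
have c_neq0 : c != 0 by rewrite invr_eq0 sqrtr_eq0 -ltNge.
have c2r : c ^+ 2 * r = 1 by rewrite exprVn sqr_sqrtr ?ltW // mulVf ?gt_eqF.
pose F t : R := - c * (mu1 * cosh (t + s0) + mu2 * sinh (t + s0)).
pose F1 t : R := - c * (mu2 * cosh (t + s0) + mu1 * sinh (t + s0)).
have dF (t : R) : is_derive t 1 F (F1 t).
  apply: (is_derive_congr (is_derive_mul (is_derive_const (- c) t)
    (is_derive_cosh_sinh_shift mu1 mu2 s0 t))).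
  by rewrite /F1; ring.
have dF1 (t : R) : is_derive t 1 F1 (F t).
  apply: (is_derive_congr (is_derive_mul (is_derive_const (- c) t)
    (is_derive_cosh_sinh_shift mu2 mu1 s0 t))).
  by rewrite /F; ring.
pose p := frame_comb (F s1) (F1 s1) c s1.
have pE t : I t -> p = frame_comb (F t) (F1 t) c t.
  by move=> It; apply: frame_comb_cst; rewrite ?inE // => u Iu; rewrite tkE // /F1; ring.
exists p; split; [|split].
- have [pa pa1 _ pB] := mink_frame_comb (F s1) (F1 s1) c Is1.
  rewrite -/p in pa pa1 pB.
  rewrite {2}/p /frame_comb minkDr minkBr 3!minkZr pa pa1 pB /F /F1 -c2r /r.
  have := cosh2_sub_sinh2 (s1 + s0).
  move: (cosh (s1 + s0)) (sinh (s1 + s0)) => ch sh chsh.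
  transitivity (c ^+ 2 * ((mu1 ^+ 2 - mu2 ^+ 2) * (ch ^+ 2 - sh ^+ 2) + 1)); first by ring.
  by rewrite chsh; ring.
- move=> t It; have [_ _ _ pB] := mink_frame_comb (F t) (F1 t) c It.
  rewrite -(pE t It) in pB; split => apt; move: pB.
    by rewrite -apt mink_a_binormal => /esym/eqP; rewrite (negbTE c_neq0).
  by rewrite -[p]opprK -apt minkNl mink_a_binormal oppr0 => /esym/eqP; rewrite (negbTE c_neq0).
- move=> t It; have [pa _ pa2 _] := mink_frame_comb (F t) (F1 t) c It.
  by rewrite (pE t It) minkBr pa pa2 subrr.
Qed.

End Frame.

Section Lorentz.
Variable R : realType.
Notation V := 'rV[R]_4.

Definition metric_mx : 'M[R]_4 := diag_mx (vec4 (-1) 1 1 1).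

Lemma minkM (x y : V) : mink x y = (x *m metric_mx *m y^T) ord0 ord0.
Proof.
rewrite minkE /metric_mx mul_mx_diag !mxE !big_ord_recl big_ord0 !mxE !mxE_crd /=.
by rewrite /bump /=; ring.
Qed.

Lemma metric_mx_sqr : metric_mx *m metric_mx = 1%:M.
Proof.
rewrite /metric_mx mul_mx_diag; apply/matrixP => i j; rewrite !mxE.
case: i => [[|[|[|[|n]]]] hi] //; case: j => [[|[|[|[|m]]]] hj] //=.
all: by rewrite ?mulr1n ?mulr0n; ring.
Qed.

Lemma mulmx_metric_trE (M N : 'M[R]_4) i j :
  (M *m metric_mx *m N^T) i j = mink (row i M) (row j N).
Proof. by rewrite minkM -!row_mul !mxE; apply: eq_bigr => k _; rewrite !mxE. Qed.

Lemma lorentz_metric (A : 'M[R]_4) : lorentz A -> A *m metric_mx *m A^T = metric_mx.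
Proof.
move=> lA; apply/matrixP => i j.
transitivity ((1%:M *m metric_mx *m (1%:M)^T) i j); last by rewrite trmx1 mul1mx mulmx1.
by rewrite !mulmx_metric_trE !rowE lA !mulmx1.
Qed.

Definition lorentz_adj (A : 'M[R]_4) := metric_mx *m A^T *m metric_mx.

Lemma mink_adj (A : 'M[R]_4) (p y : V) : mink (p *m lorentz_adj A) y = mink p (y *m A).
Proof.
rewrite !minkM trmx_mul !mulmxA /lorentz_adj.
by rewrite -[_ *m metric_mx *m metric_mx]mulmxA metric_mx_sqr mulmx1.
Qed.

Lemma lorentz_adjK (A : 'M[R]_4) : lorentz A -> lorentz_adj A *m A = 1%:M.
Proof.
by move=> lA; apply: mulmx1C; rewrite /lorentz_adj !mulmxA lorentz_metric // metric_mx_sqr.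
Qed.

Lemma mink_adj_adj (A : 'M[R]_4) (p : V) : lorentz A ->
  mink (p *m lorentz_adj A) (p *m lorentz_adj A) = mink p p.
Proof. by move=> lA; rewrite mink_adj -mulmxA lorentz_adjK // mulmx1. Qed.

End Lorentz.

Lemma derive2_mulmx (R : realType) (I : set R) (u : R -> 'rV[R]_4) (A : 'M[R]_4) s :
  open I -> I s -> (forall t, I t -> derivable u t 1) -> derivable (derive1 u) s 1 ->
  derive1 (derive1 (fun t => u t *m A)) s = derive1 (derive1 u) s *m A.
Proof.
move=> oI Is du du1.
have near_d1 : \near s, derive1 u s *m A = derive1 (fun t => u t *m A) s.
  apply: filterS (open_nbhs_nbhs (conj oI Is)) => t It.
  by rewrite [RHS]derive1E (is_derive_mulmx A (du t It)).(derive_val).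
rewrite derive1E -(near_eq_derive _ near_d1) ?oner_neq0 //.
by rewrite (is_derive_mulmx A du1).(derive_val).
Qed.

Lemma mink_geod_dir_Nf (R : realType) (b : R -> 'rV[R]_4) p s :
  mink (b s) (derive1 (derive1 b) s - b s) = 0 ->
  mink (geod_dir p (b s)) (Nf b s) = (kappa_g b s)^-1 * mink p (derive1 (derive1 b) s - b s).
Proof. by move=> b_orth; rewrite /geod_dir /Nf /Tf minkBl minkZl !minkZr b_orth; ring. Qed.

Lemma lorentz_rectifying_point (R : realType) (I : set R) (a : R -> 'rV[R]_4) A p :
  open I -> (forall s, I s -> derivable a s 1) ->
  (forall s, I s -> derivable (derive1 a) s 1) -> lorentz A ->
  (forall s, I s -> mink (a s) (derive1 (derive1 a) s - a s) = 0) ->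
  (forall s, I s -> kappa_g (fun t => a t *m A) s != 0) ->
  (forall s, I s -> mink (geod_dir p (a s *m A)) (Nf (fun t => a t *m A) s) = 0) ->
  forall s, I s -> mink (p *m lorentz_adj A) (derive1 (derive1 a) s - a s) = 0.
Proof.
move=> oI da da1 lA a_N kappa_neq0 rect s Is.
have b2E := derive2_mulmx A oI Is da (da1 s Is).
have b_N : mink (a s *m A) (derive1 (derive1 (fun t => a t *m A)) s - a s *m A) = 0.
  by rewrite b2E -mulmxBl lA a_N.
have := rect s Is; rewrite (mink_geod_dir_Nf p b_N) b2E -mulmxBl mink_adj.
by move/eqP; rewrite mulf_eq0 invr_eq0 (negbTE (kappa_neq0 s Is)) => /eqP.
Qed.

Theorem theorem3p2 (R : realType) (I : set R) (a : R -> 'rV[R]_4) :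
  open I -> is_interval I -> I !=set0 ->
  timelike_unit_speed_deSitter I a ->
  (forall s, I s -> 0 < kappa_g a s) ->
  (forall s, I s -> tau_g a s != 0) ->
  (congruent_to_timelike_rectifying I a <->
   exists mu1 mu2 s0 : R, mu2 ^+ 2 - mu1 ^+ 2 < 1 /\
     forall s, I s ->
       tau_g a s / kappa_g a s = mu1 * sinh (s + s0) + mu2 * cosh (s + s0)).
Proof.
move=> oI iI nI a_timelike kappa_gt0 tau_neq0; have [smooth [a00 a11]] := a_timelike.
have da : forall s, I s -> derivable a s 1 := smooth 0%N.
have da1 : forall s, I s -> derivable (derive1 a) s 1 := smooth 1%N.
have da2 : forall s, I s -> derivable (derive1 (derive1 a)) s 1 := smooth 2%N.
have a_N s : I s -> mink (a s) (derive1 (derive1 a) s - a s) = 0.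
  by move=> Is; rewrite minkBr (mink02 oI erefl erefl da da1 a00 a11 Is) a00 // subrr.
split.
- case=> A [lA [_ [kappa_b_neq0 [p [pp [_ rect]]]]]].
  apply: (rectifying_tau_over_kappa oI erefl erefl erefl da da1 da2 a00 a11 kappa_gt0
    tau_neq0 iI nI (q := p *m lorentz_adj A)); last by rewrite mink_adj_adj.
  exact: (lorentz_rectifying_point oI da da1 lA a_N kappa_b_neq0 rect).
- case=> mu1 [mu2 [s0 [mu_lt1 tkE]]].
  have [p [pp [p_notin rect]]] := tau_over_kappa_rectifying oI erefl erefl erefl da da1 da2
    a00 a11 kappa_gt0 tau_neq0 iI nI mu_lt1 tkE.
  exists 1%:M; split; first by move=> x y; rewrite !mulmx1.
  under eq_fun do rewrite mulmx1.
  split; first exact: a_timelike.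
  split; first by move=> s Is; rewrite gt_eqF ?kappa_gt0.
  exists p; do 2!split => //.
  by move=> s Is; rewrite (mink_geod_dir_Nf p (a_N s Is)) rect // mulr0.
Qed.
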